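(* Let $b$ be a prime, $s,m\in\mathbb{N}$, and let $C_1^{(m)},\dots,C_s^{(m)}$ be the left upper $m\times m$ submatrices of the generating matrices of a digital $(t,s)$-sequence over $\mathbb{F}_b$, $m\ge t$. Let $0=w^r_1\le\dots\le w^r_s$ (row reduction indices) and $0=w^c_1\le\dots\le w^c_s$ (column reduction indices), and let $\widetilde{C}_j^{(m)}$ be obtained from $C_j^{(m)}$ by setting its last $\min(m,w^r_j)$ rows and its last $\min(m,w^c_j)$ columns to zero. Let $\widetilde{t}$ be the minimal quality parameter of the digital net generated by $\widetilde{C}_1^{(m)},\dots,\widetilde{C}_s^{(m)}$. Then \[ \max\{0,\,m-\max\{w^c_s+t,\,w^r_s\}\}\le\rho_m\big(\widetilde{C}_1^{(m)},\dots,\widetilde{C}_s^{(m)}\big)\le\max\{0,\,m-\max\{w^c_s,w^r_s\}\}, \] and $\widetilde{t}\le\min\{m,\max\{w^c_s+t,\,w^r_s\}\}$.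
   Context: A $(t,m,s)$-net in base $b$ is a set of $b^m$ points in $[0,1)^s$ such that every elementary interval $\prod_j[a_jb^{-d_j},(a_j+1)b^{-d_j})$ of volume $b^{t-m}$ contains exactly $b^t$ points. Digital net generated by $C_1^{(m)},\dots,C_s^{(m)}\in\mathbb{F}_b^{m\times m}$: points $\boldsymbol{x}_k$, $0\le k<b^m$, with $x_{k,j}=(C_j^{(m)}\vec{k})\cdot(b^{-1},\dots,b^{-m})$, $\vec k$ the base-$b$ digit vector of $k$, arithmetic over $\mathbb{F}_b\cong\{0,\dots,b-1\}$; its minimal quality parameter is the least $t$ for which it is a $(t,m,s)$-net. A digital $(t,s)$-sequence over $\mathbb{F}_b$ is generated by infinite matrices $C_1,\dots,C_s$ over $\mathbb{F}_b$ (point $k$: $x_{k,j}=(C_j\vec k)\cdot(b^{-1},b^{-2},\dots)$) such that for every $m'\ge t$ and $k\ge0$ the points with indices $kb^{m'},\dots,kb^{m'}+b^{m'}-1$ form a $(t,m',s)$-net. The linear independence parameter $\rho_m(C_1^{(m)},\dots,C_s^{(m)})$ is the largest $d$ such that for all $d_1,\dots,d_s\in\mathbb{N}_0$ with $\sum d_j=d$ the first $d_j$ rows of $C_j^{(m)}$, $1\le j\le s$, are jointly linearly independent over $\mathbb{F}_b$. *)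

From HB Require Import structures.
From mathcomp Require Import all_boot all_order all_algebra.

Import Order.TTheory GRing.Theory Num.Theory.
Local Open Scope ring_scope.

Definition digit (b k l : nat) : 'F_b := (((k %/ b ^ l) %% b)%N)%:R.

Definition bval (b m : nat) (y : 'I_m -> 'F_b) : rat :=
  \sum_(i < m) (nat_of_ord (y i))%:R / (b ^ i.+1)%:R.

Definition dnet_point (b m s : nat) (M : 'I_s -> 'M['F_b]_m) (k : nat) (j : 'I_s) : rat :=
  bval b m (fun i : 'I_m => \sum_(l < m) M j i l * digit b k l).

Definition is_net (b t m s : nat) (x : nat -> 'I_s -> rat) : Prop :=
  (t <= m)%N /\
  (forall i j, (i < b ^ m)%N -> 0 <= x i j < 1) /\
  forall d a : 'I_s -> nat,
    (\sum_(j < s) d j)%N = (m - t)%N ->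
    (forall j, a j < b ^ d j)%N ->
    #|[set i : 'I_(b ^ m) | [forall j : 'I_s,
         ((a j)%:R / (b ^ d j)%:R <= x i j) &&
         (x i j < (a j).+1%:R / (b ^ d j)%:R)]]| = (b ^ t)%N.

Definition is_min_quality (b m s : nat) (x : nat -> 'I_s -> rat) (tt : nat) : Prop :=
  is_net b tt m s x /\ forall t', is_net b t' m s x -> (tt <= t')%N.

(* Infinite generating matrices: C j i l is the entry in row i, column l
   (0-based) of C_j.  Point n of the sequence, truncated to its first m digits
   (b-adic truncation [x_n]_{b,m}); the digits of n at positions l >= n.+1
   vanish, so the sum over l < n.+1 is the full product C_j * digitvector(n). *)
Definition dseq_point_trunc (b s : nat) (C : 'I_s -> nat -> nat -> 'F_b)
    (m n : nat) (j : 'I_s) : rat :=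
  bval b m (fun i : 'I_m => \sum_(l < n.+1) C j i l * digit b n l).

Definition is_digital_ts_seq (b t s : nat) (C : 'I_s -> nat -> nat -> 'F_b) : Prop :=
  forall m', (t <= m')%N -> forall k : nat,
    is_net b t m' s (fun i j => dseq_point_trunc b s C m' (k * b ^ m' + i) j).

Definition upleft (b s m : nat) (C : 'I_s -> nat -> nat -> 'F_b) (j : 'I_s) : 'M['F_b]_m :=
  \matrix_(i < m, l < m) C j i l.

Definition rows_indep (b m s : nat) (M : 'I_s -> 'M['F_b]_m) (d : 'I_s -> nat) : Prop :=
  (forall j, d j <= m)%N /\
  forall c : 'I_s -> 'I_m -> 'F_b,
    \sum_(j < s) \sum_(i < m | (i < d j)%N) c j i *: row i (M j) = 0 ->
    forall j (i : 'I_m), (i < d j)%N -> c j i = 0.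

Definition rho_ok (b m s : nat) (M : 'I_s -> 'M['F_b]_m) (r : nat) : Prop :=
  forall d : 'I_s -> nat, (\sum_(j < s) d j)%N = r -> rows_indep b m s M d.

Definition is_rho (b m s : nat) (M : 'I_s -> 'M['F_b]_m) (r : nat) : Prop :=
  rho_ok b m s M r /\ forall r', rho_ok b m s M r' -> (r' <= r)%N.

Definition reduce (b m : nat) (M : 'M['F_b]_m) (wr wc : nat) : 'M['F_b]_m :=
  \matrix_(i < m, l < m) if (i < m - wr)%N && (l < m - wc)%N then M i l else 0.

From mathcomp Require Import all_boot all_order all_algebra.
From mathcomp Require Import boolp zify ring.
Import GRing.Theory Num.Theory.
Local Open Scope ring_scope.

(* The points of a digital net lying in an elementary interval with side
   lengths b^-d_j are exactly the k whose digit vector solves a linear system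
   over F_b: its rows are the first d_j rows of the generating matrices, its
   right-hand side is fixed by the interval.  Counting solutions shows that the
   net is a (t,m,s)-net iff all these families with sum d_j = m - t are
   linearly independent, i.e. iff rho_m >= m - t.
   For the reduced matrices, the upper left (m - w^c_s)-blocks of the C_j
   generate a (t, m - w^c_s, s)-net, and the first m - max(w^c_s + t, w^r_s)
   rows of the reduced matrices agree with those blocks, which gives the lower
   bound on rho_m and hence the bound on the quality parameter.  The upper bound
   holds because rho_m is at most the rank of the last reduced matrix, whose
   nonzero entries lie in an (m - w^r_s) x (m - w^c_s) block. *)

(* [numeral b Y k] has base-[b] digits [Y 0, ..., Y k.-1], most significant first. *)
Fixpoint numeral (b : nat) (Y : nat -> nat) (k : nat) : nat :=
  if k is k'.+1 then (b * numeral b Y k' + Y k')%N else 0%N.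

Section Numeral.

Context {b : nat}.
Hypothesis b_gt0 : (0 < b)%N.

Lemma numeral_lt Y k : (forall i, i < k -> Y i < b)%N -> (numeral b Y k < b ^ k)%N.
Proof.
elim: k => [|k IH] HY /=; first by rewrite expn0.
have lt_k : (numeral b Y k < b ^ k)%N by apply: IH => i Hi; apply: HY; lia.
have : (b * (numeral b Y k).+1 <= b * b ^ k)%N by rewrite leq_mul2l lt_k orbT.
have := HY k (ltnSn k); rewrite expnS; nia.
Qed.

Lemma numeralD Y d k :
  numeral b Y (d + k) = (numeral b Y d * b ^ k + numeral b (fun i => Y (d + i)) k)%N.
Proof.
elim: k => [|k IH] /=; first by rewrite addn0 expn0 muln1 addn0.
by rewrite addnS /= IH expnS; ring.
Qed.

Lemma numeral_div Y d m : (forall i, i < m -> Y i < b)%N -> (d <= m)%N ->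
  (numeral b Y m %/ b ^ (m - d))%N = numeral b Y d.
Proof.
move=> HY le_dm; rewrite -{1}(subnKC le_dm) numeralD.
rewrite divnMDl ?expn_gt0 ?b_gt0 // divn_small ?addn0 //.
by apply: numeral_lt => i Hi; apply: HY; lia.
Qed.

Lemma numeral_eqP Y d a : (forall i, i < d -> Y i < b)%N -> (a < b ^ d)%N ->
  numeral b Y d = a <-> (forall i, i < d -> Y i = (a %/ b ^ (d - i.+1)) %% b)%N.
Proof.
elim: d a => [|d IH] a HY Ha /=.
  by split=> [_ //|_]; rewrite expn0 in Ha; lia.
have HY' : (forall i, i < d -> Y i < b)%N by move=> i Hi; apply: HY; lia.
have Ha' : (a %/ b < b ^ d)%N by rewrite ltn_divLR // -expnSr.
have digit_shift i : (i < d)%N ->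
    ((a %/ b) %/ b ^ (d - i.+1) = a %/ b ^ (d.+1 - i.+1))%N.
  by move=> Hi; rewrite -divnMA -expnS; congr (_ %/ b ^ _)%N; lia.
split=> [Ea i Hi|Hd].
  have Hdiv : numeral b Y d = (a %/ b)%N.
    by rewrite -Ea mulnC divnMDl // divn_small ?addn0 ?HY.
  case: (ltngtP i d) => [Hid|Hid|->].
  - by rewrite ((IH _ HY' Ha').1 Hdiv i Hid) digit_shift.
  - by move: Hi; rewrite ltnS leqNgt Hid.
  - by rewrite subnn expn0 divn1 -Ea mulnC modnMDl modn_small ?HY.
have -> : numeral b Y d = (a %/ b)%N.
  by apply/(IH _ HY' Ha') => i Hi; rewrite digit_shift // Hd // ltnW.
by rewrite Hd // subnn expn0 divn1 mulnC -divn_eq.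
Qed.

Lemma sum_numeral (Y : nat -> nat) m :
  \sum_(i < m) ((Y i)%:R / (b ^ i.+1)%:R : rat) = (numeral b Y m)%:R / (b ^ m)%:R.
Proof.
elim: m => [|m IH]; first by rewrite big_ord0 mul0r.
have b_neq0 : (b%:R : rat) != 0 by rewrite pnatr_eq0 -lt0n.
have bm_neq0 : ((b ^ m)%:R : rat) != 0 by rewrite pnatr_eq0 -lt0n expn_gt0 b_gt0.
rewrite big_ord_recr /= IH !natrD !natrM !expnS !natrM.
by field; rewrite b_neq0 bm_neq0.
Qed.

Lemma eq_from_digits m i j : (i < b ^ m)%N -> (j < b ^ m)%N ->
  (forall l, l < m -> (i %/ b ^ l) %% b = (j %/ b ^ l) %% b)%N -> i = j.
Proof.
elim: m i j => [|m IH] i j Hi Hj H; first by rewrite expn0 in Hi Hj; lia.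
have Hd : (i %/ b = j %/ b)%N.
  apply: IH; rewrite ?ltn_divLR -?expnSr //.
  by move=> l Hl; have := H l.+1 Hl; rewrite expnS !divnMA.
have := H 0%N (ltn0Sn _); rewrite expn0 !divn1 => Hmod.
by rewrite (divn_eq i b) (divn_eq j b) Hd Hmod.
Qed.

End Numeral.

Lemma elementary_interval_div (b m d a P : nat) : (0 < b)%N -> (d <= m)%N ->
  (((a%:R / (b ^ d)%:R : rat) <= P%:R / (b ^ m)%:R) &&
   ((P%:R / (b ^ m)%:R : rat) < a.+1%:R / (b ^ d)%:R)) = (P %/ b ^ (m - d) == a)%N.
Proof.
move=> b_gt0 le_dm.
have q_gt0 : (0 < b ^ (m - d))%N by rewrite expn_gt0 b_gt0.
have bm_gt0 : (0 < (b ^ m)%:R :> rat) by rewrite ltr0n expn_gt0 b_gt0.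
have bd_neq0 : ((b ^ d)%:R : rat) != 0 by rewrite pnatr_eq0 -lt0n expn_gt0 b_gt0.
have q_neq0 : ((b ^ (m - d))%:R : rat) != 0 by rewrite pnatr_eq0 -lt0n.
have scale x : (x%:R / (b ^ d)%:R : rat) = (x * b ^ (m - d))%:R / (b ^ m)%:R.
  by rewrite -(subnKC le_dm) expnD !natrM addKn; field; rewrite bd_neq0 q_neq0.
rewrite !scale ler_pM2r ?invr_gt0 // ltr_pM2r ?invr_gt0 // ler_nat ltr_nat.
by rewrite eqn_leq -[(_ %/ _ <= a)%N]ltnS ltn_divLR // leq_divRL // andbC.
Qed.

Section PrimeField.

Context {b : nat}.
Hypothesis b_prime : prime b.
Let b_gt0 := prime_gt0 b_prime.
Let b_gt1 := prime_gt1 b_prime.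

Lemma Fp_lt (x : 'F_b) : (x < b)%N.
Proof. by rewrite -[X in (_ < X)%N](Fp_cast b_prime) ltn_ord. Qed.

Lemma digitE k l : nat_of_ord (digit b k l) = ((k %/ b ^ l) %% b)%N.
Proof. by rewrite /digit (val_Fp_nat b_prime) modn_mod. Qed.

Lemma digit_small k l : (k < b ^ l)%N -> digit b k l = 0.
Proof. by move=> lt_k; rewrite /digit divn_small // mod0n. Qed.

Lemma digit_exp e l : digit b (b ^ e) l = (l == e)%:R.
Proof.
case: (ltngtP l e) => [lt_le|lt_el|->].
- rewrite /digit -(subnKC (ltnW lt_le)) expnD mulKn ?expn_gt0 ?b_gt0 //.
  by rewrite -(subnSK lt_le) expnS modnMr.
- by rewrite digit_small // ltn_exp2l.
- by rewrite /digit divnn expn_gt0 b_gt0 modn_small.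
Qed.

Definition nat_digit {m} (y : 'I_m -> 'F_b) (i : nat) : nat :=
  if insub i is Some i' then nat_of_ord (y i') else 0%N.

Lemma nat_digit_ord m (y : 'I_m -> 'F_b) (i : 'I_m) : nat_digit y i = y i.
Proof. by rewrite /nat_digit valK. Qed.

Lemma nat_digit_lt m (y : 'I_m -> 'F_b) i : (nat_digit y i < b)%N.
Proof. by rewrite /nat_digit; case: insub => [i'|//]; apply: Fp_lt. Qed.

Lemma bvalE m (y : 'I_m -> 'F_b) :
  bval b m y = (numeral b (nat_digit y) m)%:R / (b ^ m)%:R.
Proof.
by rewrite -sum_numeral //; apply: eq_bigr => i _; rewrite nat_digit_ord.
Qed.

Lemma bval_ge0_lt1 m (y : 'I_m -> 'F_b) : 0 <= bval b m y < 1.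
Proof.
rewrite bvalE divr_ge0 ?ler0n //= ltr_pdivrMr ?ltr0n ?expn_gt0 ?b_gt0 //.
by rewrite mul1r ltr_nat numeral_lt // => i _; apply: nat_digit_lt.
Qed.

Lemma bval_in_interval m (y : 'I_m -> 'F_b) d a : (d <= m)%N -> (a < b ^ d)%N ->
  ((a%:R / (b ^ d)%:R <= bval b m y) && (bval b m y < a.+1%:R / (b ^ d)%:R))
  <-> (forall i : 'I_m, (i < d)%N -> y i = digit b a (d - i.+1)).
Proof.
move=> le_dm lt_a.
have digit_lt k i : (i < k -> nat_digit y i < b)%N by move=> _; apply: nat_digit_lt.
rewrite bvalE elementary_interval_div // (numeral_div b_gt0 _ _ _ (digit_lt m) le_dm).
have digitsP := @numeral_eqP _ b_gt0 (nat_digit y) d a (digit_lt d) lt_a.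
split=> [/eqP/digitsP H i lt_id|H].
  by apply: val_inj; rewrite /= digitE -H // nat_digit_ord.
apply/eqP/digitsP => i lt_id; have lt_im := leq_trans lt_id le_dm.
by rewrite -(digitE a) -(H (Ordinal lt_im)) // -nat_digit_ord.
Qed.

Definition digit_row m (k : nat) : 'rV['F_b]_m := \row_(l < m) digit b k l.

Lemma digit_row_inj m : injective (fun k : 'I_(b ^ m) => digit_row m k).
Proof.
move=> i j /rowP eq_ij.
apply/val_inj/(@eq_from_digits _ b_gt0 m _ _ (ltn_ord i) (ltn_ord j)).
by move=> l lt_lm; have := eq_ij (Ordinal lt_lm); rewrite !mxE -!digitE => ->.
Qed.

Lemma card_digit_row m (P : pred 'rV['F_b]_m) :
  #|[set k : 'I_(b ^ m) | P (digit_row m k)]| = #|[set v | P v]|.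
Proof.
have onto v : v \in codom (fun k : 'I_(b ^ m) => digit_row m k).
  apply: inj_card_onto; first exact: digit_row_inj.
  by rewrite card_mx (card_Fp b_prime) card_ord mul1n.
rewrite -(card_imset _ (@digit_row_inj m)); apply: eq_card => v.
rewrite inE; apply/imsetP/idP => [[k]|Pv]; first by rewrite inE => ? ->.
by move: Pv; have /codomP [k ->] := onto v => Pk; exists k; rewrite ?inE.
Qed.

End PrimeField.

Lemma card_preimage_row_free (F : finFieldType) n m (A : 'M[F]_(n, m)) (c : 'rV_n) :
  row_free A -> (#|[set v : 'rV_m | v *m A^T == c]| * #|F| ^ n = #|F| ^ m)%N.
Proof.
move=> freeA.
have onto c' : exists u : 'rV_m, u *m A^T = c'.
  have : row_full A^T by rewrite /row_full mxrank_tr.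
  by move/(submx_full c')/submxP => [u ->]; exists u.
have card_fiber c' :
    #|[set v : 'rV_m | v *m A^T == c']| = #|[set v : 'rV_m | v *m A^T == 0]|.
  have [u Hu] := onto c'; symmetry.
  rewrite -(card_imset _ (addIr u)); apply: eq_card => v; rewrite [RHS]inE.
  apply/imsetP/eqP => [[w]|Hv].
    by rewrite inE => /eqP Hw ->; rewrite mulmxDl Hw Hu add0r.
  by exists (v - u); rewrite ?subrK // inE mulmxBl Hv Hu subrr.
have total : (\sum_(c' : 'rV_n) #|[set v : 'rV_m | v *m A^T == c']|)%N = (#|F| ^ m)%N.
  rewrite -[m in RHS]mul1n -card_mx -sum1_card.
  rewrite (partition_big (fun v => v *m A^T) predT) //=.
  by apply: eq_bigr => c' _; rewrite -sum1_card; apply: eq_bigl => v; rewrite inE.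
rewrite -total (eq_bigr _ (fun c' _ => card_fiber c')) sum_nat_const card_mx mul1n.
by rewrite card_fiber mulnC.
Qed.

Lemma leq_term_sum {n} (d : 'I_n -> nat) j : (d j <= \sum_(k < n) d k)%N.
Proof. by rewrite (bigD1 j) //= leq_addr. Qed.

Lemma sum_delta {n} (j0 : 'I_n) r : (\sum_(j < n) (if j == j0 then r else 0%N))%N = r.
Proof. by rewrite (bigD1 j0) //= eqxx big1 ?addn0 // => j /negbTE ->. Qed.

Section DigitalNets.

Context {b m s : nat}.
Hypothesis b_prime : prime b.
Let b_gt0 := prime_gt0 b_prime.
Implicit Types (M : 'I_s -> 'M['F_b]_m) (d : 'I_s -> nat).

Definition lead_rows d := [set p : 'I_s * 'I_m | (p.2 < d p.1)%N].

Definition stack_rows M d : 'M['F_b]_(#|lead_rows d|, m) :=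
  \matrix_(q < #|lead_rows d|) row (enum_val q).2 (M (enum_val q).1).

Lemma card_lead_rows d : (forall j, d j <= m)%N -> #|lead_rows d| = (\sum_j d j)%N.
Proof.
move=> le_dm; rewrite -sum1_card.
rewrite (eq_bigl (fun p : 'I_s * 'I_m => true && (p.2 < d p.1)%N)) => [|p]; last first.
  by rewrite inE.
rewrite -(pair_big_dep xpredT (fun j (i : 'I_m) => (i < d j)%N) (fun _ _ => 1%N)) /=.
by apply: eq_bigr => j _; rewrite (big_ord_narrow (le_dm j)) sum1_card card_ord.
Qed.

Lemma mul_stack_rows M d (c : 'I_s -> 'I_m -> 'F_b) :
  (\row_q c (enum_val q).1 (enum_val q).2) *m stack_rows M d =
  \sum_(j < s) \sum_(i < m | (i < d j)%N) c j i *: row i (M j).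
Proof.
rewrite mulmx_sum_row (pair_big_dep xpredT (fun j (i : 'I_m) => (i < d j)%N)) /=.
under eq_bigr do rewrite mxE rowK.
rewrite -(big_enum_val (fun p : 'I_s * 'I_m => c p.1 p.2 *: row p.2 (M p.1))).
by apply: eq_bigl => p; rewrite inE.
Qed.

Lemma row_free_stack_rows M d : rows_indep b m s M d -> row_free (stack_rows M d).
Proof.
move=> [_ indep]; apply: inj_row_free => w Hw.
pose c j i := \sum_(q | enum_val q == (j, i)) w 0 q.
have wE : w = \row_q c (enum_val q).1 (enum_val q).2.
  apply/rowP => q; rewrite mxE /c -surjective_pairing (big_pred1 q) // => q'.
  by rewrite (inj_eq enum_val_inj).
apply/rowP => q; rewrite wE mxE mxE; have := enum_valP q; rewrite inE => Hq.
by apply: indep Hq; rewrite -mul_stack_rows -wE.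
Qed.

(* Entry [(j, i)] is the digit [i] of coordinate [j] of every point of the
   elementary interval with corner [(a j / b ^ d j)_j]. *)
Definition box_digits d (a : 'I_s -> nat) : 'rV['F_b]_#|lead_rows d| :=
  \row_(q < #|lead_rows d|)
    digit b (a (enum_val q).1) (d (enum_val q).1 - (enum_val q).2.+1).

Lemma dnet_point_in_box M d a (k : nat) :
  (forall j, d j <= m)%N -> (forall j, a j < b ^ d j)%N ->
  [forall j : 'I_s,
     ((a j)%:R / (b ^ d j)%:R <= dnet_point b m s M k j) &&
     (dnet_point b m s M k j < (a j).+1%:R / (b ^ d j)%:R)]
  = (digit_row m k *m (stack_rows M d)^T == box_digits d a).
Proof.
move=> le_dm lt_a.
have entry q : (digit_row m k *m (stack_rows M d)^T) 0 q =
    \sum_(l < m) M (enum_val q).1 (enum_val q).2 l * digit b k l.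
  by rewrite mxE; apply: eq_bigr => l _; rewrite !mxE mulrC.
apply/forallP/eqP => [inbox|digitsE j].
  apply/rowP => q; have := enum_valP q; rewrite inE entry mxE => Hq.
  by have /(bval_in_interval b_prime _ _ _ _ (le_dm _) (lt_a _)) -> := inbox (enum_val q).1.
rewrite /dnet_point; apply/(bval_in_interval b_prime _ _ _ _ (le_dm j) (lt_a j)) => i lt_i.
have ji_in : (j, i) \in lead_rows d by rewrite inE.
move/rowP/(_ (enum_rank_in ji_in (j, i))): digitsE.
by rewrite entry mxE (enum_rankK_in ji_in ji_in).
Qed.

Lemma rows_indep_net t M : (t <= m)%N -> rho_ok b m s M (m - t) ->
  is_net b t m s (dnet_point b m s M).
Proof.
move=> le_tm indep; split=> //; split=> [k j _|d a sum_d lt_a].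
  exact: bval_ge0_lt1.
have [le_dm _] := indep d sum_d.
under eq_finset => k do rewrite dnet_point_in_box //.
rewrite (@card_digit_row b b_prime m (fun v => v *m (stack_rows M d)^T == box_digits d a)).
have free_stack := row_free_stack_rows _ _ (indep d sum_d).
have := @card_preimage_row_free _ _ _ _ (box_digits d a) free_stack.
rewrite (card_Fp b_prime) [X in (_ * b ^ X)%N]card_lead_rows // sum_d => card_box.
apply/eqP; rewrite -(@eqn_pmul2r (b ^ (m - t))) ?expn_gt0 ?b_gt0 //.
by rewrite card_box -expnD subnKC.
Qed.

(* The corner of the elementary interval whose digits form the unit vector at
   row [i0] of block [j0]. *)
Definition unit_corner d (j0 : 'I_s) (i0 : 'I_m) (j : 'I_s) : nat :=
  if j == j0 then (b ^ (d j0 - i0.+1))%N else 0%N.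

Lemma unit_corner_lt d j0 (i0 : 'I_m) j :
  (i0 < d j0)%N -> (unit_corner d j0 i0 j < b ^ d j)%N.
Proof.
move=> lt_i0; rewrite /unit_corner; case: eqP => [->|_]; last by rewrite expn_gt0 b_gt0.
by rewrite ltn_exp2l ?prime_gt1 //; lia.
Qed.

Lemma box_digits_unit_corner d j0 (i0 : 'I_m) (c : 'I_s -> 'I_m -> 'F_b) : (i0 < d j0)%N ->
  (\row_q c (enum_val q).1 (enum_val q).2 *m (box_digits d (unit_corner d j0 i0))^T) 0 0
  = c j0 i0.
Proof.
move=> lt_i0; set a := unit_corner d j0 i0.
have box_delta p :
    p \in lead_rows d -> digit b (a p.1) (d p.1 - p.2.+1) = (p == (j0, i0))%:R.
  case: p => j i; rewrite inE /= => lt_i; rewrite xpair_eqE /a /unit_corner.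
  case: eqP lt_i => [->|ne] lt_i; last by rewrite digit_small ?expn_gt0 ?b_gt0.
  rewrite digit_exp //=; do 2!congr (_ _).
  by apply/eqP/eqP => [E|->//]; apply: ord_inj; lia.
rewrite mxE (eq_bigr (fun q => c (enum_val q).1 (enum_val q).2 *
    digit b (a (enum_val q).1) (d (enum_val q).1 - (enum_val q).2.+1))); last first.
  by move=> q _; rewrite !mxE.
rewrite -(big_enum_val (fun p => c p.1 p.2 * digit b (a p.1) (d p.1 - p.2.+1))).
have ji0_in : (j0, i0) \in lead_rows d by rewrite inE.
rewrite (bigD1 (j0, i0)) //= (box_delta _ ji0_in) eqxx mulr1.
rewrite big1 ?addr0 // => p /andP [p_in ne].
by rewrite (box_delta _ p_in) (negbTE ne) mulr0.
Qed.

Lemma net_rows_indep t M : is_net b t m s (dnet_point b m s M) -> rho_ok b m s M (m - t).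
Proof.
move=> [_ [_ card_box]] d sum_d.
have le_dm j : (d j <= m)%N by rewrite (leq_trans (leq_term_sum d j)) // sum_d leq_subr.
split=> // c comb0 j0 i0 lt_i0; set a := unit_corner d j0 i0.
have lt_a j : (a j < b ^ d j)%N by apply: unit_corner_lt.
have /card_gt0P [k] : (0 < #|[set k : 'I_(b ^ m) | [forall j : 'I_s,
         ((a j)%:R / (b ^ d j)%:R <= dnet_point b m s M k j)%R &&
         (dnet_point b m s M k j < (a j).+1%:R / (b ^ d j)%:R)%R]]|)%N.
  by rewrite card_box // expn_gt0 b_gt0.
rewrite inE dnet_point_in_box // => /eqP digitsE.
rewrite -(box_digits_unit_corner _ _ _ c lt_i0) -digitsE trmx_mul trmxK mulmxA.
by rewrite mul_stack_rows comb0 mul0mx mxE.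
Qed.

Lemma dnet_is_netP t M :
  is_net b t m s (dnet_point b m s M) <-> (t <= m)%N /\ rho_ok b m s M (m - t).
Proof.
split=> [net|[le_tm indep]]; last exact: rows_indep_net.
by split; [case: net | apply: net_rows_indep].
Qed.

End DigitalNets.

Section LinearIndependence.

Context {b m s : nat}.
Implicit Types (M : 'I_s -> 'M['F_b]_m) (d : 'I_s -> nat).

Lemma rows_indep0 M d : (\sum_j d j)%N = 0%N -> rows_indep b m s M d.
Proof.
move=> sum0; have d0 j : d j = 0%N by apply/eqP; rewrite -leqn0 -sum0 leq_term_sum.
by split=> [j|c _ j i]; rewrite d0.
Qed.

Lemma rows_indep_le M d d' :
  (forall j, d j <= d' j)%N -> rows_indep b m s M d' -> rows_indep b m s M d.
Proof.
move=> le_dd' [le_d'm indep]; split=> [j|c comb0 j i lt_i].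
  exact: leq_trans (le_dd' j) (le_d'm j).
pose c' j (i : 'I_m) := if (i < d j)%N then c j i else 0.
have comb'0 : \sum_(j < s) \sum_(i < m | (i < d' j)%N) c' j i *: row i (M j) = 0.
  rewrite -[RHS]comb0; apply: eq_bigr => j' _; rewrite big_mkcond [RHS]big_mkcond /=.
  apply: eq_bigr => i' _; rewrite /c'.
  case: (ltnP i' (d j')) => [lt_i'|_]; last by rewrite scale0r if_same.
  by rewrite (leq_trans lt_i' (le_dd' j')).
by have := indep c' comb'0 j i (leq_trans lt_i (le_dd' j)); rewrite /c' lt_i.
Qed.

Lemma rho_ok_le {M r r'} : (0 < s)%N -> (r' <= r)%N ->
  rho_ok b m s M r -> rho_ok b m s M r'.
Proof.
move=> s_gt0 le_r'r rho_r d sum_d; pose j0 : 'I_s := Ordinal s_gt0.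
apply: (@rows_indep_le _ _ (fun j => d j + (if j == j0 then r - r' else 0))%N).
  by move=> j; rewrite leq_addr.
by apply: rho_r; rewrite big_split /= sum_d sum_delta subnKC.
Qed.

Lemma rho_ok_rank {M r} j : rho_ok b m s M r -> (r <= \rank (M j))%N.
Proof.
move=> rho_r; have [le_dm indep] := rho_r _ (sum_delta j r).
have le_rm : (r <= m)%N by have := le_dm j; rewrite eqxx.
case: r => [//|r] in rho_r le_dm indep le_rm *.
pose top := rowsub (widen_ord le_rm) (M j).
have free_top : row_free top.
  apply/inj_row_free => v v_top0; apply/rowP => k.
  pose c j' (i : 'I_m) := if j' == j then v 0 (inord i) else 0.
  have comb0 : \sum_(j' < s) \sum_(i < m | (i < if j' == j then r.+1 else 0)%N)
      c j' i *: row i (M j') = 0.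
    rewrite (bigD1 j) //= [X in _ + X]big1 => [|j' /negbTE ne]; last first.
      by apply: big1 => i _; rewrite /c ne scale0r.
    rewrite addr0 eqxx (big_ord_narrow le_rm); transitivity (v *m top) => //.
    by rewrite mulmx_sum_row; apply: eq_bigr => k' _; rewrite /c eqxx row_rowsub inord_val.
  have := indep c comb0 j (widen_ord le_rm k); rewrite /c !eqxx /= => /(_ (ltn_ord k)).
  by rewrite inord_val mxE.
by rewrite -(eqP free_top) mxrankS ?rowsub_sub.
Qed.

Lemma is_rho_exists M : (0 < s)%N -> exists r, is_rho b m s M r.
Proof.
move=> s_gt0; pose j0 : 'I_s := Ordinal s_gt0.
have rho0 : `[< rho_ok b m s M 0 >] by apply/asboolP => d; apply: rows_indep0.
have le_m r : `[< rho_ok b m s M r >] -> (r <= m)%N.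
  by move/asboolP/(rho_ok_rank j0)/leq_trans; apply; apply: rank_leq_col.
case: (ex_maxnP (ex_intro _ 0%N rho0) le_m) => r /asboolP rho_r max_r.
by exists r; split=> // r' /asboolP /max_r.
Qed.

Lemma rows_indep_block m' (N : 'I_s -> 'M['F_b]_m') M d (le_m'm : (m' <= m)%N) :
  rows_indep b m' s N d ->
  (forall j (i l : 'I_m'), (i < d j)%N ->
     M j (widen_ord le_m'm i) (widen_ord le_m'm l) = N j i l) ->
  rows_indep b m s M d.
Proof.
move=> [le_dm' indep] MN; split=> [j|c comb0 j i lt_i].
  exact: leq_trans (le_dm' j) le_m'm.
pose c' j (i : 'I_m') := c j (widen_ord le_m'm i).
have comb'0 : \sum_(j < s) \sum_(i < m' | (i < d j)%N) c' j i *: row i (N j) = 0.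
  apply/rowP => l; transitivity ((\sum_(j < s) \sum_(i < m | (i < d j)%N)
      c j i *: row i (M j)) 0 (widen_ord le_m'm l)); last by rewrite comb0 !mxE.
  rewrite !summxE; apply: eq_bigr => j' _; rewrite !summxE (big_ord_narrow (le_dm' j')).
  rewrite (big_ord_narrow (leq_trans (le_dm' j') le_m'm)).
  apply: eq_bigr => k _; rewrite !mxE -MN; last exact: (ltn_ord k).
  by congr (c j' _ * M j' _ _); apply: val_inj.
have lt_im' : (i < m')%N := leq_trans lt_i (le_dm' j).
have := indep c' comb'0 j (Ordinal lt_im') lt_i; rewrite /c'.
by congr (c j _ = 0); apply: val_inj.
Qed.

End LinearIndependence.

Lemma rank_reduce_cols {b m} (M : 'M['F_b]_m) wr wc :
  (\rank (reduce b m M wr wc) <= m - wc)%N.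
Proof.
have -> : reduce b m M wr wc = reduce b m M wr wc *m pid_mx (m - wc).
  apply/matrixP => i l; rewrite [RHS]mxE (bigD1 l) //= big1 => [|k /negbTE ne].
    rewrite !mxE eqxx /= addr0.
    by case: (l < m - wc)%N; rewrite ?andbT ?andbF ?mulr1 ?mulr0.
  by move: ne; rewrite [pid_mx _ _ _]mxE val_eqE => ->; rewrite mulr0.
by rewrite (leq_trans (mxrankM_maxr _ _)) // rank_pid_mx ?leq_subr.
Qed.

Lemma rank_reduce b m (M : 'M['F_b]_m) wr wc :
  (\rank (reduce b m M wr wc) <= m - maxn wr wc)%N.
Proof.
have tr_reduce : (reduce b m M wr wc)^T = reduce b m M^T wc wr.
  by apply/matrixP => i l; rewrite !mxE andbC.
have := rank_reduce_cols M wr wc; rewrite -mxrank_tr tr_reduce.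
have := rank_reduce_cols M^T wc wr; lia.
Qed.

Lemma eq_is_net b t m s (x y : nat -> 'I_s -> rat) :
  (forall i j, (i < b ^ m)%N -> x i j = y i j) -> is_net b t m s x -> is_net b t m s y.
Proof.
move=> xy [le_tm [range card_box]]; split=> //; split=> [i j lt_i|d a sum_d lt_a].
  by rewrite -xy ?range.
rewrite -(card_box d a sum_d lt_a); apply: eq_card => i; rewrite !inE.
by apply: eq_forallb => j; rewrite !xy.
Qed.

Lemma is_min_quality_exists b m s x t :
  is_net b t m s x -> exists tt, is_min_quality b m s x tt.
Proof.
move=> net_t; have exP : exists t, `[< is_net b t m s x >] by exists t; apply/asboolP.
case: (ex_minnP exP) => tt /asboolP net_tt min_tt.
by exists tt; split=> // t' /asboolP /min_tt.
Qed.

Lemma sum_digit_small {b} (F : nat -> 'F_b) {k n N} :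
  (0 < b)%N -> (k < b ^ n)%N -> (n <= N)%N ->
  \sum_(l < N) F l * digit b k l = \sum_(l < n) F l * digit b k l.
Proof.
move=> b_gt0 lt_k le_nN; rewrite [RHS](big_ord_widen N (fun l => F l * digit b k l) le_nN).
rewrite [RHS]big_mkcond /=; apply: eq_bigr => l _; case: ltnP => // le_nl.
by rewrite digit_small ?mulr0 // (leq_trans lt_k) // leq_pexp2l.
Qed.

(* Only the indices [0 <= k < b ^ m] of the sequence matter, for which the
   infinite product [C_j k] reduces to the upper-left [m x m] block. *)
Lemma dseq_upleft_net {b t s C m} : (1 < b)%N -> is_digital_ts_seq b t s C -> (t <= m)%N ->
  is_net b t m s (dnet_point b m s (upleft b s m C)).
Proof.
move=> b_gt1 seqC le_tm; have b_gt0 : (0 < b)%N by apply: ltnW.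
apply: eq_is_net (seqC m le_tm 0%N) => k j lt_k.
rewrite /dseq_point_trunc /dnet_point /bval mul0n add0n.
apply: eq_bigr => i _; congr ((nat_of_ord _)%:R / _).
under [RHS]eq_bigr do rewrite mxE.
have lt_kk : (k < b ^ k.+1)%N := ltnW (ltn_expl k.+1 b_gt1).
rewrite -(sum_digit_small (C j i) b_gt0 lt_kk (leq_addl m k.+1)).
by rewrite (sum_digit_small (C j i) b_gt0 lt_k (leq_addr k.+1 m)).
Qed.

Lemma rho_ok_reduce b t s C m (wr wc : 'I_s -> nat) R W :
  prime b -> (0 < s)%N -> is_digital_ts_seq b t s C ->
  (forall j, wr j <= R)%N -> (forall j, wc j <= W)%N ->
  rho_ok b m s (fun j => reduce b m (upleft b s m C j) (wr j) (wc j)) (m - maxn (W + t) R).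
Proof.
move=> b_prime s_gt0 seqC le_wr le_wc.
have [le_tm'|lt_m't] := leqP t (m - W); last first.
  have -> : (m - maxn (W + t) R = 0)%N by lia.
  by move=> d; apply: rows_indep0.
set m' := (m - W)%N in le_tm'.
have rho_block : rho_ok b m' s (upleft b s m' C) (m' - t).
  have net_block := dseq_upleft_net (prime_gt1 b_prime) seqC le_tm'.
  exact: ((@dnet_is_netP b m' s b_prime t _).1 net_block).2.
move=> d sum_d.
have le_dR j : (d j <= m - R)%N by rewrite (leq_trans (leq_term_sum d j)) // sum_d; lia.
apply: (@rows_indep_block b m s m' (upleft b s m' C) _ d (leq_subr W m)).
  by apply: (rho_ok_le s_gt0 _ rho_block) sum_d; lia.
move=> j i l lt_i; rewrite !mxE /=.
have -> : (i < m - wr j)%N by have := le_wr j; have := le_dR j; lia.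
by have -> : (l < m - wc j)%N by have := le_wc j; have := ltn_ord l; lia.
Qed.

Theorem mainTheorem4 (b s m t : nat) (C : 'I_s -> nat -> nat -> 'F_b)
    (wr wc : nat -> nat) :
  prime b -> (0 < s)%N -> is_digital_ts_seq b t s C -> (t <= m)%N ->
  wr 1%N = 0%N -> wc 1%N = 0%N ->
  (forall i j, (1 <= i)%N -> (i <= j)%N -> (j <= s)%N -> (wr i <= wr j)%N) ->
  (forall i j, (1 <= i)%N -> (i <= j)%N -> (j <= s)%N -> (wc i <= wc j)%N) ->
  let Ct := fun j : 'I_s => reduce b m (upleft b s m C j) (wr j.+1) (wc j.+1) in
  ((exists r, is_rho b m s Ct r) /\
   forall r, is_rho b m s Ct r ->
     (maxn 0 (m - maxn (wc s + t) (wr s)) <= r <= maxn 0 (m - maxn (wc s) (wr s)))%N) /\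
  ((exists tt, is_min_quality b m s (dnet_point b m s Ct) tt) /\
   forall tt, is_min_quality b m s (dnet_point b m s Ct) tt ->
     (tt <= minn m (maxn (wc s + t) (wr s)))%N).
Proof.
move=> b_prime s_gt0 seqC le_tm _ _ mono_wr mono_wc Ct.
have rho_low : rho_ok b m s Ct (m - maxn (wc s + t) (wr s)).
  apply: (@rho_ok_reduce b t s C m (fun j => wr j.+1) (fun j => wc j.+1)) => // j.
    exact: mono_wr.
  exact: mono_wc.
have lt_s : (s.-1 < s)%N by rewrite ltn_predL.
have rank_last : (\rank (Ct (Ordinal lt_s)) <= m - maxn (wc s) (wr s))%N.
  by rewrite maxnC /Ct /= prednK //; apply: rank_reduce.
set T := minn m (maxn (wc s + t) (wr s)).
have net_T : is_net b T m s (dnet_point b m s Ct).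
  apply/dnet_is_netP => //; split; first exact: geq_minl.
  by apply: (rho_ok_le s_gt0 _ rho_low); rewrite /T; lia.
split; split.
- exact: is_rho_exists.
- move=> r [rho_r max_r]; rewrite !max0n max_r //=.
  exact: leq_trans (rho_ok_rank _ rho_r) rank_last.
- exact: is_min_quality_exists net_T.
- by move=> tt [_]; apply.
Qed.
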